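(* Let $X,X'$ and $Y$ be nonempty sets and let $F\colon X^*\to Y$ be a standard and preassociative function. Let $g\colon X'\to X$ be any function and let $\mathbf{a}\in Y\setminus\mathrm{ran}(F^{\flat})$. Define $H\colon X'^*\to Y$ by $H(\varepsilon)=\mathbf{a}$ and $H_n(x_1,\ldots,x_n)=F_n(g(x_1),\ldots,g(x_n))$ for every integer $n\geqslant 1$. Then $H$ is standard and preassociative.
   Context: For a nonempty set $Z$, $Z^*=\bigcup_{n\geqslant 0}Z^n$ is the set of all finite tuples over $Z$, with $Z^0=\{\varepsilon\}$, $\varepsilon$ the empty tuple. For tuples $\mathbf{x},\mathbf{y}$, $F(\mathbf{x},\mathbf{y})$ denotes $F$ applied to the concatenation of $\mathbf{x}$ and $\mathbf{y}$ (and similarly for more tuples); concatenation with $\varepsilon$ leaves a tuple unchanged. For $F\colon Z^*\to Y$, $F_n=F|_{Z^n}$ and $F^{\flat}=F|_{Z^*\setminus\{\varepsilon\}}$. $F$ is standard if $F(\mathbf{x})=F(\varepsilon)$ holds only if $\mathbf{x}=\varepsilon$. $F$ is preassociative if for all $\mathbf{x},\mathbf{y},\mathbf{y}',\mathbf{z}\in Z^*$, $F(\mathbf{y})=F(\mathbf{y}')$ implies $F(\mathbf{x},\mathbf{y},\mathbf{z})=F(\mathbf{x},\mathbf{y}',\mathbf{z})$. *)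

From Stdlib Require Import List.
Import ListNotations.

Definition standard {Z Y : Type} (F : list Z -> Y) : Prop :=
  forall x : list Z, F x = F [] -> x = [].

Definition preassociative {Z Y : Type} (F : list Z -> Y) : Prop :=
  forall x y y' z : list Z, F y = F y' -> F (x ++ y ++ z) = F (x ++ y' ++ z).

Definition in_ran_flat {Z Y : Type} (F : list Z -> Y) (a : Y) : Prop :=
  exists x : list Z, x <> [] /\ F x = a.

Definition Hfun {X X' Y : Type} (F : list X -> Y) (g : X' -> X) (a : Y)
  (x : list X') : Y :=
  match x with
  | [] => a
  | _ :: _ => F (map g x)
  end.

(* Since a is not a value of F on nonempty tuples, H(x) = a forces x = eps,
   which gives standardness; and H(y) = H(y') forces y, y' to be both empty or
   both nonempty, in which case preassociativity of F applies to the images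
   under map g, because map g commutes with concatenation. *)
From Stdlib Require Import List.
Import ListNotations.

Section Hfun.

Variables (X X' Y : Type) (F : list X -> Y) (g : X' -> X) (a : Y).
Hypothesis a_not_in_ran : ~ in_ran_flat F a.

Lemma Hfun_cons_neq (u : X') (x : list X') : Hfun F g a (u :: x) <> a.
Proof.
  intros Heq; apply a_not_in_ran.
  exists (map g (u :: x)); split; [discriminate | exact Heq].
Qed.

Lemma Hfun_standard : standard (Hfun F g a).
Proof.
  intros [|u x] Heq; [reflexivity |].
  exfalso; exact (Hfun_cons_neq u x Heq).
Qed.

Lemma Hfun_app_cons (x : list X') (u : X') (y z : list X') :
  Hfun F g a (x ++ (u :: y) ++ z) = F (map g x ++ map g (u :: y) ++ map g z).
Proof. rewrite <- !map_app; destruct x; reflexivity. Qed.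

Hypothesis F_preassociative : preassociative F.

Lemma Hfun_preassociative : preassociative (Hfun F g a).
Proof.
  intros x [|u y] [|u' y'] z Heq.
  - reflexivity.
  - exfalso; exact (Hfun_cons_neq u' y' (eq_sym Heq)).
  - exfalso; exact (Hfun_cons_neq u y Heq).
  - rewrite !Hfun_app_cons; exact (F_preassociative _ _ _ _ Heq).
Qed.

End Hfun.

Theorem proposition3p4 (X X' Y : Type)
  (hX : inhabited X) (hX' : inhabited X') (hY : inhabited Y)
  (F : list X -> Y) (hstd : standard F) (hpre : preassociative F)
  (g : X' -> X) (a : Y) (ha : ~ in_ran_flat F a) :
  standard (Hfun F g a) /\ preassociative (Hfun F g a).
Proof.
  split; [apply Hfun_standard | apply Hfun_preassociative]; assumption.
Qed.
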